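(* Let $\Omega=\{1,\dots,n\}$ and let $p,q\in\Delta_n=\{r\in\mathbb{R}^n: r\ge 0,\ \sum_i r_i=1\}$. Fix weights $\sigma_1,\dots,\sigma_n\ge 0$ and set $\Sigma=\mathrm{Diag}\{\sigma_1,\dots,\sigma_n\}$. Let $E,E'$ be two disjoint sets of $L$ observations each, drawn i.i.d. from $p$, and $F,F'$ two disjoint sets of $R$ observations each, drawn i.i.d. from $q$, all four sets being mutually independent. Put $\gamma=R/(L+R)$, $\bar\gamma=1-\gamma=L/(L+R)$, $M=2LR/(L+R)$. Let $\omega,\omega',\zeta,\zeta'\in\Delta_n$ be the empirical distributions of $E,E',F,F'$ respectively, let $$\chi=(\omega-\zeta)^T\Sigma(\omega'-\zeta')=\sum_{i=1}^n\sigma_i(\omega_i-\zeta_i)(\omega'_i-\zeta'_i),$$ and let the test $\mathcal T$ claim a difference ($H_1$) if and only if $|\chi|>\ell$. Suppose the threshold satisfies $$\ell\ge 2\sqrt2\,\theta M^{-1}\sqrt{\textstyle\sum_i\sigma_i^2p_i^2}$$ for some $\theta\ge1$. Then: (1) if $p=q$, the probability that $\mathcal T$ claims $H_1$ is at most $1/\theta^2$; (2) if $$\sum_i\sigma_i(p_i-q_i)^2>\ell+2\sqrt2\,\theta\Big[M^{-1/2}\sqrt{\textstyle\sum_i\sigma_i^2(p_i-q_i)^2(\gamma p_i+\bar\gamma q_i)}+M^{-1}\sqrt{\gamma\textstyle\sum_i\sigma_i^2p_i^2+\bar\gamma\sum_i\sigma_i^2q_i^2}\Big],$$ then the probability that $\mathcal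 T$ claims $H_1$ is at least $1-3/\theta^2$.
   Context: The empirical distribution of a finite set of observations with values in $\{1,\dots,n\}$ is the vector in $\Delta_n$ whose $i$-th entry is the fraction of observations equal to $i$. *)

From HB Require Import structures.
From mathcomp Require Import all_boot all_order all_algebra.
Set Implicit Arguments. Unset Strict Implicit. Unset Printing Implicit Defensive.
Import Order.TTheory GRing.Theory Num.Theory.
Local Open Scope ring_scope.

(* Omega = {1..n} is modelled by 'I_n; a distribution is a function 'I_n -> K. *)
Definition in_simplex (K : realFieldType) (n : nat) (p : 'I_n -> K) : Prop :=
  (forall i, 0 <= p i) /\ \sum_(i < n) p i = 1.

(* A set of L observations is a sample e : 'I_L -> 'I_n (observation k has value e k). *)
Definition empirical (K : realFieldType) (n L : nat) (e : {ffun 'I_L -> 'I_n})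
  : 'I_n -> K := fun i => #|[set k | e k == i]|%:R / L%:R.

Definition sample_prob (K : realFieldType) (n L : nat) (p : 'I_n -> K)
  (e : {ffun 'I_L -> 'I_n}) : K := \prod_(k < L) p (e k).

Definition chi_stat (K : realFieldType) (n : nat) (sigma w w' z z' : 'I_n -> K) : K :=
  \sum_(i < n) sigma i * (w i - z i) * (w' i - z' i).

Definition prob_claim_H1 (K : realFieldType) (n L R : nat) (p q sigma : 'I_n -> K)
  (ell : K) : K :=
  \sum_(E : {ffun 'I_L -> 'I_n}) \sum_(E' : {ffun 'I_L -> 'I_n})
  \sum_(F : {ffun 'I_R -> 'I_n}) \sum_(F' : {ffun 'I_R -> 'I_n})
    (sample_prob p E * sample_prob p E' * sample_prob q F * sample_prob q F') *
    (if ell < `| chi_stat sigma (empirical K E) (empirical K E')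
                              (empirical K F) (empirical K F') |
     then 1 else 0).

From HB Require Import structures.
From mathcomp Require Import all_boot all_order all_algebra.
From mathcomp Require Import lra ring.
Import Order.TTheory GRing.Theory Num.Theory.
Local Open Scope ring_scope.

(* chi is a bilinear form in two independent copies of the vector omega - zeta,
   whose first two moments follow from the multinomial moments
   E omega_i = p_i and E omega_i omega_j = p_i p_j + (delta_ij p_i - p_i p_j) / L.
   Under p = q the mean of chi vanishes and Chebyshev's inequality for |chi| > ell
   gives (1), once E chi^2 is bounded by 2 (1/L + 1/R)^2 sum_i sigma_i^2 p_i^2.
   Otherwise E chi = sum_i sigma_i (p_i - q_i)^2, and Chebyshev's inequality for
   chi - E chi gives (2), the variance being at most 16 times the square of the
   bracket in the threshold. *)

Set Implicit Arguments. Unset Strict Implicit. Unset Printing Implicit Defensive.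

Section Expectation.
Variable K : realFieldType.

Definition expect (T : finType) (w f : T -> K) : K := \sum_x w x * f x.

Definition wprod (T1 T2 : finType) (w1 : T1 -> K) (w2 : T2 -> K) (z : T1 * T2) : K :=
  w1 z.1 * w2 z.2.

Section Moments.
Variables (T : finType) (w : T -> K).

Lemma eq_expect f g : f =1 g -> expect w f = expect w g.
Proof. by move=> fg; apply: eq_bigr => x _; rewrite fg. Qed.

Lemma expectD f g : expect w (fun x => f x + g x) = expect w f + expect w g.
Proof. by rewrite /expect -big_split; apply: eq_bigr => x _; rewrite mulrDr. Qed.

Lemma expectB f g : expect w (fun x => f x - g x) = expect w f - expect w g.
Proof. by rewrite /expect -sumrB; apply: eq_bigr => x _; rewrite mulrBr. Qed.

Lemma expectZ c f : expect w (fun x => c * f x) = c * expect w f.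
Proof. by rewrite /expect mulr_sumr; apply: eq_bigr => x _; rewrite mulrCA. Qed.

Lemma expect_sum (I : finType) (f : I -> T -> K) :
  expect w (fun x => \sum_i f i x) = \sum_i expect w (f i).
Proof.
by rewrite /expect exchange_big; apply: eq_bigr => x _; rewrite mulr_sumr.
Qed.

Lemma expect_center_sqr f m : expect w (fun _ => 1) = 1 -> expect w f = m ->
  expect w (fun x => (f x - m) ^+ 2) = expect w (fun x => f x ^+ 2) - m ^+ 2.
Proof.
move=> w1 wf; rewrite (eq_expect (g := fun x => f x ^+ 2 + (-2 * m * f x + m ^+ 2 * 1))).
  by rewrite !expectD !expectZ w1 wf; ring.
by move=> x; ring.
Qed.

Hypothesis w_ge0 : forall x, 0 <= w x.

Lemma ler_expect f g : (forall x, f x <= g x) -> expect w f <= expect w g.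
Proof. by move=> fg; apply: ler_sum => x _; apply: ler_wpM2l. Qed.

Lemma chebyshev_le f (ell c : K) : 0 <= ell -> 0 <= c ->
  expect w (fun x => f x ^+ 2) <= c * ell ^+ 2 ->
  expect w (fun x => if ell < `|f x| then 1 else 0) <= c.
Proof.
move=> ell0 c0 hf; have [ellp|ellN] := ltrP 0 ell.
  have ell2 : 0 < ell ^+ 2 by exact: exprn_gt0.
  rewrite -(ler_pM2r ell2) mulrC -expectZ (le_trans _ hf) //.
  apply: ler_expect => x; case: ltrP => [lt|_]; last by rewrite mulr0 sqr_ge0.
  by rewrite mulr1 -(real_normK (num_real (f x))) ler_sqr ?nnegrE // ltW.
(* For [ell = 0], [E f^2 <= 0] forces [f = 0] wherever [w > 0]. *)
move: hf; have {ell0 ellN} -> : ell = 0 by apply/eqP; rewrite eq_le ellN.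
rewrite expr0n mulr0 => hf.
have sqr_terms_ge0 x : 0 <= w x * f x ^+ 2 by rewrite mulr_ge0 ?sqr_ge0.
have terms0 : forall x, true -> w x * f x ^+ 2 = 0.
  by apply: psumr_eq0P => [x _|]; [exact: sqr_terms_ge0 | apply/eqP; rewrite eq_le hf sumr_ge0].
suff -> : expect w (fun x => if 0 < `|f x| then 1 else 0) = 0 by [].
apply: big1 => x _; case: ifP => //; rewrite ?mulr0 // normr_gt0 mulr1 => fx0.
by move/eqP: (terms0 x isT); rewrite mulf_eq0 sqrf_eq0 (negbTE fx0) orbF => /eqP.
Qed.

Lemma chebyshev_ge f (ell D c : K) : expect w (fun _ => 1) = 1 -> ell < D ->
  expect w (fun x => (f x - D) ^+ 2) <= c * (D - ell) ^+ 2 ->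
  1 - c <= expect w (fun x => if ell < `|f x| then 1 else 0).
Proof.
move=> w1 ellD hf; have gap2 : 0 < (D - ell) ^+ 2 by rewrite exprn_gt0 // subr_gt0.
rewrite lerBlDr addrC -lerBlDr -{1}w1 -expectB -(ler_pM2r gap2) mulrC -expectZ.
apply: le_trans hf; apply: ler_expect => x; case: ltrP => [_|small].
  by rewrite subrr mulr0 sqr_ge0.
have := ler_norm (f x); rewrite subr0 mulr1; nra.
Qed.

End Moments.

Section Product.
Variables (T1 T2 : finType) (w1 : T1 -> K) (w2 : T2 -> K).

Lemma expect_wprod f g :
  expect (wprod w1 w2) (fun z => f z.1 * g z.2) = expect w1 f * expect w2 g.
Proof.
by rewrite /expect big_distrlr pair_bigA; apply: eq_bigr => -[x y] _; rewrite /wprod /=; ring.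
Qed.

Lemma expect_wprod_l f : expect w2 (fun _ => 1) = 1 ->
  expect (wprod w1 w2) (fun z => f z.1) = expect w1 f.
Proof.
move=> w2_1; rewrite -[RHS]mulr1 -w2_1 -expect_wprod.
by apply: eq_expect => z; rewrite mulr1.
Qed.

Lemma expect_wprod_r g : expect w1 (fun _ => 1) = 1 ->
  expect (wprod w1 w2) (fun z => g z.2) = expect w2 g.
Proof.
move=> w1_1; rewrite -[RHS]mul1r -w1_1 -expect_wprod.
by apply: eq_expect => z; rewrite mul1r.
Qed.

Lemma wprod_ge0 : (forall x, 0 <= w1 x) -> (forall y, 0 <= w2 y) ->
  forall z, 0 <= wprod w1 w2 z.
Proof. by move=> w1_ge0 w2_ge0 z; apply: mulr_ge0. Qed.

End Product.

Section BilinearIID.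
Variables (T : finType) (w : T -> K) (n : nat) (sigma : 'I_n -> K) (X : T -> 'I_n -> K).

Lemma expect_bilinear_iid :
  expect (wprod w w) (fun z => \sum_i sigma i * X z.1 i * X z.2 i) =
  \sum_i sigma i * expect w (X^~ i) ^+ 2.
Proof.
rewrite expect_sum; apply: eq_bigr => i _.
by rewrite expr2 -expect_wprod -expectZ; apply: eq_expect => z; rewrite mulrA.
Qed.

Lemma expect_bilinear_iid_sqr :
  expect (wprod w w) (fun z => (\sum_i sigma i * X z.1 i * X z.2 i) ^+ 2) =
  \sum_i \sum_j sigma i * sigma j * expect w (fun x => X x i * X x j) ^+ 2.
Proof.
under eq_expect => z do rewrite expr2 big_distrlr.
rewrite expect_sum; apply: eq_bigr => i _; rewrite expect_sum; apply: eq_bigr => j _.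
rewrite expr2 -expect_wprod -expectZ; apply: eq_expect => z /=; ring.
Qed.

End BilinearIID.
End Expectation.

Definition draw_cov (K : ringType) (n : nat) (r : 'I_n -> K) (i j : 'I_n) : K :=
  (i == j)%:R * r i - r i * r j.

Lemma sum_mul_indicator (K : ringType) (n : nat) (c : 'I_n -> K) (i : 'I_n) :
  \sum_x c x * (x == i)%:R = c i.
Proof.
rewrite (bigD1 i) //= eqxx mulr1 big1 ?addr0 // => x /negbTE ->; exact: mulr0.
Qed.

Section Sample.
Variables (K : realFieldType) (n L : nat) (p : 'I_n -> K).
Hypotheses (p_ge0 : forall i, 0 <= p i) (p_sum1 : \sum_i p i = 1).

Local Notation P := (@sample_prob K n L p).

Lemma sample_prob_ge0 E : 0 <= P E.
Proof. exact: prodr_ge0. Qed.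

Lemma expect_sample_prod (h : 'I_L -> 'I_n -> K) :
  expect P (fun E => \prod_k h k (E k)) = \prod_k \sum_i p i * h k i.
Proof.
by rewrite bigA_distr_bigA; apply: eq_bigr => E _; rewrite /sample_prob -big_split.
Qed.

Lemma sum_p_mul1 : \sum_i p i * 1 = 1.
Proof. by rewrite -[RHS]p_sum1; apply: eq_bigr => i _; rewrite mulr1. Qed.

Lemma sum_p_if b (f : 'I_n -> K) :
  \sum_i p i * (if b then f i else 1) = if b then \sum_i p i * f i else 1.
Proof. by case: b; last exact: sum_p_mul1. Qed.

Lemma expect_sample1 : expect P (fun _ => 1) = 1.
Proof.
have := expect_sample_prod (fun _ _ => 1); rewrite big1_eq => ->.
by apply: big1 => k _; exact: sum_p_mul1.
Qed.

Lemma expect_sample_coord k (f : 'I_n -> K) :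
  expect P (fun E => f (E k)) = \sum_i p i * f i.
Proof.
have := expect_sample_prod (fun k' x => if k' == k then f x else 1).
under [RHS]eq_bigr do rewrite sum_p_if.
rewrite -!big_mkcond !big_pred1_eq => <-.
by apply: eq_expect => E; rewrite -big_mkcond big_pred1_eq.
Qed.

Lemma prod_if2 (k k' : 'I_L) (F G : 'I_L -> K) : k != k' ->
  \prod_k0 (if k0 == k then F k0 else if k0 == k' then G k0 else 1) = F k * G k'.
Proof.
move=> kk'; have k'k : k' != k by rewrite eq_sym.
rewrite (bigD1 k) //= eqxx (bigD1 k') //= (negbTE k'k) eqxx big1 ?mulr1 //.
by move=> k0 /andP[/negbTE -> /negbTE ->].
Qed.

Lemma expect_sample_coord2 k k' (f g : 'I_n -> K) : k != k' ->
  expect P (fun E => f (E k) * g (E k')) = (\sum_i p i * f i) * (\sum_i p i * g i).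
Proof.
move=> kk'.
have := expect_sample_prod (fun k0 x => if k0 == k then f x else if k0 == k' then g x else 1).
have sum_if k0 : \sum_x p x * (if k0 == k then f x else if k0 == k' then g x else 1) =
    if k0 == k then \sum_x p x * f x else if k0 == k' then \sum_x p x * g x else 1.
  by case: (k0 == k); last exact: sum_p_if.
under [RHS]eq_bigr do rewrite sum_if.
by rewrite prod_if2 // => <-; apply: eq_expect => E; rewrite prod_if2.
Qed.

Lemma expect_sample_ind_pair k k' i j :
  expect P (fun E => (E k == i)%:R * (E k' == j)%:R) =
  p i * p j + (k == k')%:R * draw_cov p i j.
Proof.
have [<-|kk'] := eqVneq k k'.
  rewrite (expect_sample_coord k (fun x => (x == i)%:R * (x == j)%:R)) /draw_cov mul1r addrC subrK.
  rewrite (eq_bigr (fun x => (p x * (i == j)%:R) * (x == i)%:R)).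
    by rewrite (sum_mul_indicator (fun x => p x * (i == j)%:R)) mulrC.
  by move=> x _; case: eqP => [->|_]; rewrite /= ?mulr1n ?mulr0n ?mul1r ?mulr1 ?mul0r ?mulr0.
rewrite (expect_sample_coord2 (fun x => (x == i)%:R) (fun x => (x == j)%:R)) // mul0r addr0.
by rewrite !sum_mul_indicator.
Qed.

Hypothesis L_gt0 : (0 < L)%N.

Let L_neq0 : L%:R != 0 :> K.
Proof. by rewrite pnatr_eq0 -lt0n. Qed.

Lemma empiricalE (E : {ffun 'I_L -> 'I_n}) i : empirical K E i = L%:R^-1 * \sum_k (E k == i)%:R.
Proof.
rewrite /empirical mulrC -sum1dep_card natr_sum big_mkcond /=; congr (_ * _).
by apply: eq_bigr => k _; case: (E k == i).
Qed.

Lemma expect_empirical i : expect P (fun E => empirical K E i) = p i.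
Proof.
under eq_expect => E do rewrite empiricalE.
rewrite expectZ expect_sum.
under eq_bigr => k _ do rewrite (expect_sample_coord k (fun x => (x == i)%:R)) sum_mul_indicator.
by rewrite sumr_const card_ord -[p i *+ L]mulr_natr mulrCA mulVf ?mulr1.
Qed.

Lemma expect_empirical2 i j :
  expect P (fun E => empirical K E i * empirical K E j) =
  p i * p j + L%:R^-1 * draw_cov p i j.
Proof.
under eq_expect => E do rewrite !empiricalE mulrACA big_distrlr /=.
rewrite expectZ expect_sum.
under eq_bigr => k _ do rewrite expect_sum.
under eq_bigr => k _ do under eq_bigr => k' _ do rewrite expect_sample_ind_pair.
have inner (k : 'I_L) : \sum_k' (p i * p j + (k == k')%:R * draw_cov p i j) =
    p i * p j *+ L + draw_cov p i j.
  rewrite big_split sumr_const card_ord /= (bigD1 k) //= eqxx mul1r big1 ?addr0 //.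
  by move=> k'; rewrite eq_sym => /negbTE ->; rewrite mul0r.
rewrite (eq_bigr _ (fun k _ => inner k)) sumr_const card_ord.
by rewrite -[_ *+ L]mulr_natr -[p i * p j *+ L]mulr_natr; field.
Qed.

End Sample.

Section CovarianceBounds.
Variables (K : realFieldType) (n : nat) (sigma : 'I_n -> K).

Lemma sum_draw_cov_quad_le (d r : 'I_n -> K) :
  \sum_i \sum_j sigma i * sigma j * (d i * d j * draw_cov r i j) <=
  \sum_i sigma i ^+ 2 * d i ^+ 2 * r i.
Proof.
suff -> : \sum_i \sum_j sigma i * sigma j * (d i * d j * draw_cov r i j) =
    \sum_i sigma i ^+ 2 * d i ^+ 2 * r i - (\sum_i sigma i * d i * r i) ^+ 2.
  by rewrite lerBlDr lerDl sqr_ge0.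
rewrite expr2 big_distrlr -sumrB; apply: eq_bigr => i _ /=.
under eq_bigr do rewrite /draw_cov !mulrBr.
rewrite sumrB (bigD1 i) //= eqxx big1 => [|j]; last first.
  by rewrite eq_sym => /negbTE ->; rewrite !mul0r !mulr0.
by rewrite addr0 /= mulr1n; congr (_ - _); [ring | apply: eq_bigr => j _; ring].
Qed.

Hypothesis sigma_ge0 : forall i, 0 <= sigma i.

Lemma sum_draw_cov_sqr_le (r : 'I_n -> K) : in_simplex r ->
  \sum_i \sum_j sigma i * sigma j * draw_cov r i j ^+ 2 <= 2 * \sum_i sigma i ^+ 2 * r i ^+ 2.
Proof.
move=> [r_ge0 r_sum1]; set S := \sum_i sigma i ^+ 2 * r i ^+ 2.
have S_ge0 : 0 <= S by apply: sumr_ge0 => i _; rewrite mulr_ge0 ?sqr_ge0.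
have sum_r2_le1 : \sum_i r i ^+ 2 <= 1.
  rewrite -r_sum1; apply: ler_sum => i _; rewrite expr2 ler_piMr //.
  by rewrite -r_sum1 (bigD1 i) //= lerDl sumr_ge0.
pose a i := sigma i ^+ 2 * r i ^+ 2.
(* Off the diagonal, bound sigma_i sigma_j by (sigma_i^2 + sigma_j^2) / 2. *)
have termwise i j : sigma i * sigma j * draw_cov r i j ^+ 2 <=
    a j * (j == i)%:R + (a i * r j ^+ 2 + r i ^+ 2 * a j) / 2.
  rewrite /draw_cov /a -subr_ge0; have [<-|ij] := eqVneq i j; set slack := (X in 0 <= X).
    have -> : slack = 2 * (sigma i ^+ 2 * r i ^+ 3) by rewrite /slack /= mulr1n; field.
    by rewrite mulr_ge0 // mulr_ge0 ?sqr_ge0 ?exprn_ge0.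
  have -> : slack = (r i * r j) ^+ 2 * (sigma i - sigma j) ^+ 2 / 2.
    by rewrite /slack /= mulr0n mul0r add0r; field.
  by apply: divr_ge0; [apply: mulr_ge0; exact: sqr_ge0 | exact: ler0n].
set B := \sum_i r i ^+ 2 in sum_r2_le1.
have row_sum i : \sum_j (a j * (j == i)%:R + (a i * r j ^+ 2 + r i ^+ 2 * a j) / 2) =
    a i + (a i * B + r i ^+ 2 * S) / 2.
  by rewrite big_split sum_mul_indicator -mulr_suml big_split -!mulr_sumr.
apply: le_trans; first by apply: ler_sum => i _; apply: ler_sum => j _; exact: termwise.
rewrite (eq_bigr _ (fun i _ => row_sum i)) big_split -mulr_suml big_split -!mulr_suml /=.
have -> : \sum_i a i = S by [].
rewrite -/B; nra.
Qed.

Lemma bilinear_variance_le (p q : 'I_n -> K) (u v : K) :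
  in_simplex p -> in_simplex q -> 0 <= u -> 0 <= v ->
  \sum_i \sum_j sigma i * sigma j *
      ((p i - q i) * (p j - q j) + u * draw_cov p i j + v * draw_cov q i j) ^+ 2
    - (\sum_i sigma i * (p i - q i) ^+ 2) ^+ 2 <=
  4 * (u ^+ 2 * \sum_i sigma i ^+ 2 * p i ^+ 2 + v ^+ 2 * \sum_i sigma i ^+ 2 * q i ^+ 2)
    + 2 * \sum_i sigma i ^+ 2 * (p i - q i) ^+ 2 * (u * p i + v * q i).
Proof.
move=> p_simplex q_simplex u_ge0 v_ge0; set d := fun i => p i - q i.
pose quad (r : 'I_n -> K) i j := sigma i * sigma j * (d i * d j * draw_cov r i j).
pose sqr (r : 'I_n -> K) i j := sigma i * sigma j * draw_cov r i j ^+ 2.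
have termwise i j :
    sigma i * sigma j * (d i * d j + u * draw_cov p i j + v * draw_cov q i j) ^+ 2
      - sigma i * d i ^+ 2 * (sigma j * d j ^+ 2) <=
    2 * u ^+ 2 * sqr p i j + 2 * v ^+ 2 * sqr q i j + 2 * u * quad p i j + 2 * v * quad q i j.
  rewrite -subr_ge0; set slack := (X in 0 <= X).
  have -> : slack = sigma i * sigma j * (u * draw_cov p i j - v * draw_cov q i j) ^+ 2.
    by rewrite /slack /sqr /quad; ring.
  by apply: mulr_ge0; [exact: mulr_ge0 | exact: sqr_ge0].
have sum_lin (a b c e : K) (A B C E : 'I_n -> 'I_n -> K) :
    \sum_i \sum_j (a * A i j + b * B i j + c * C i j + e * E i j) =
    a * (\sum_i \sum_j A i j) + b * (\sum_i \sum_j B i j)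
      + c * (\sum_i \sum_j C i j) + e * (\sum_i \sum_j E i j).
  by rewrite !mulr_sumr -!big_split; apply: eq_bigr => i _; rewrite !mulr_sumr -!big_split.
rewrite expr2 big_distrlr -sumrB.
under eq_bigr do rewrite -sumrB.
apply: le_trans; first by apply: ler_sum => i _; apply: ler_sum => j _; exact: termwise.
rewrite sum_lin.
have -> : \sum_i sigma i ^+ 2 * (p i - q i) ^+ 2 * (u * p i + v * q i) =
    u * \sum_i sigma i ^+ 2 * d i ^+ 2 * p i + v * \sum_i sigma i ^+ 2 * d i ^+ 2 * q i.
  by rewrite !mulr_sumr -big_split; apply: eq_bigr => i _; rewrite /d /=; ring.
have u2_ge0 : 0 <= 2 * u ^+ 2 by rewrite mulr_ge0 ?sqr_ge0.
have v2_ge0 : 0 <= 2 * v ^+ 2 by rewrite mulr_ge0 ?sqr_ge0.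
have := ler_wpM2l u2_ge0 (sum_draw_cov_sqr_le p_simplex).
have := ler_wpM2l v2_ge0 (sum_draw_cov_sqr_le q_simplex).
have := ler_wpM2l (mulr_ge0 (ler0n _ 2) u_ge0) (sum_draw_cov_quad_le d p).
have := ler_wpM2l (mulr_ge0 (ler0n _ 2) v_ge0) (sum_draw_cov_quad_le d q).
rewrite /sqr /quad; lra.
Qed.

End CovarianceBounds.

Definition emp_diff (K : realFieldType) (n L R : nat)
  (z : {ffun 'I_L -> 'I_n} * {ffun 'I_R -> 'I_n}) (i : 'I_n) : K :=
  empirical K z.1 i - empirical K z.2 i.

Section TwoSample.
Variables (K : realFieldType) (n L R : nat) (p q sigma : 'I_n -> K).
Hypotheses (p_simplex : in_simplex p) (q_simplex : in_simplex q).
Hypotheses (L_gt0 : (0 < L)%N) (R_gt0 : (0 < R)%N).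

Local Notation P := (wprod (@sample_prob K n L p) (@sample_prob K n R q)).

Lemma expect_pair1 : expect P (fun _ => 1) = 1.
Proof.
case: p_simplex q_simplex => [p_ge0 p_sum1] [q_ge0 q_sum1].
by rewrite (expect_wprod_l _ (fun _ => 1)) expect_sample1.
Qed.

Lemma expect_emp_diff i : expect P (fun z => emp_diff K z i) = p i - q i.
Proof.
case: p_simplex q_simplex => [p_ge0 p_sum1] [q_ge0 q_sum1].
rewrite /emp_diff expectB (expect_wprod_l _ (fun E => empirical K E i)) ?expect_sample1 //.
by rewrite (expect_wprod_r _ (fun F => empirical K F i)) ?expect_sample1 // !expect_empirical.
Qed.

Lemma expect_emp_diff2 i j :
  expect P (fun z => emp_diff K z i * emp_diff K z j) =
  (p i - q i) * (p j - q j) + L%:R^-1 * draw_cov p i j + R%:R^-1 * draw_cov q i j.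
Proof.
case: p_simplex q_simplex => [p_ge0 p_sum1] [q_ge0 q_sum1].
rewrite (eq_expect P (g := fun z =>
    (empirical K z.1 i * empirical K z.1 j + empirical K z.2 i * empirical K z.2 j)
    - (empirical K z.1 i * empirical K z.2 j + empirical K z.1 j * empirical K z.2 i))).
  rewrite expectB !expectD.
  rewrite (expect_wprod_l _ (fun E => empirical K E i * empirical K E j)) ?expect_sample1 //.
  rewrite (expect_wprod_r _ (fun F => empirical K F i * empirical K F j)) ?expect_sample1 //.
  rewrite (expect_wprod _ _ (fun E => empirical K E i) (fun F => empirical K F j)).
  rewrite (expect_wprod _ _ (fun E => empirical K E j) (fun F => empirical K F i)).
  by rewrite !expect_empirical2 ?expect_empirical //; ring.
by move=> z; rewrite /emp_diff; ring.
Qed.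

Lemma prob_claim_H1E ell : prob_claim_H1 L R p q sigma ell =
  expect (wprod P P) (fun z =>
    if ell < `|\sum_i sigma i * emp_diff K z.1 i * emp_diff K z.2 i| then 1 else 0).
Proof.
rewrite /prob_claim_H1.
under eq_bigr => E _ do rewrite exchange_big /=.
under eq_bigr => E _ do under eq_bigr => F _ do rewrite pair_bigA /=.
rewrite pair_bigA /= /expect pair_bigA /=.
apply: eq_bigr => z _; rewrite /wprod /emp_diff /chi_stat; congr (_ * _); ring.
Qed.

End TwoSample.

Section Test.
Variables (K : realFieldType) (n L R : nat) (p q sigma : 'I_n -> K).
Hypotheses (p_simplex : in_simplex p) (q_simplex : in_simplex q).
Hypotheses (L_gt0 : (0 < L)%N) (R_gt0 : (0 < R)%N).
Hypothesis sigma_ge0 : forall i, 0 <= sigma i.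

Local Notation u := (L%:R^-1 : K).
Local Notation v := (R%:R^-1 : K).

Lemma sample_quadruple_ge0 (r s : 'I_n -> K) : in_simplex r -> in_simplex s ->
  forall z, 0 <= wprod (wprod (@sample_prob K n L r) (@sample_prob K n R s))
                       (wprod (@sample_prob K n L r) (@sample_prob K n R s)) z.
Proof.
by move=> [r_ge0 _] [s_ge0 _]; do 2![apply: wprod_ge0 => ?]; exact: sample_prob_ge0.
Qed.

Lemma prob_claim_H1_null_le (ell c : K) : 0 <= ell -> 0 <= c ->
  (u + v) ^+ 2 * (2 * \sum_i sigma i ^+ 2 * p i ^+ 2) <= c * ell ^+ 2 ->
  prob_claim_H1 L R p p sigma ell <= c.
Proof.
move=> ell_ge0 c_ge0 hc; rewrite prob_claim_H1E //.
apply: (chebyshev_le (sample_quadruple_ge0 p_simplex p_simplex) ell_ge0 c_ge0).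
rewrite expect_bilinear_iid_sqr; apply: le_trans hc.
under eq_bigr => i _ do under eq_bigr => j _ do
  rewrite (expect_emp_diff2 p_simplex p_simplex L_gt0 R_gt0) subrr mul0r add0r
          -mulrDl exprMn mulrCA.
under eq_bigr do rewrite -mulr_sumr.
rewrite -mulr_sumr.
by apply: ler_wpM2l; [exact: sqr_ge0 | exact: sum_draw_cov_sqr_le].
Qed.

Local Notation P := (wprod (@sample_prob K n L p) (@sample_prob K n R q)).

Lemma prob_claim_H1_alt_ge (ell c : K) :
  ell < \sum_i sigma i * (p i - q i) ^+ 2 ->
  4 * (u ^+ 2 * \sum_i sigma i ^+ 2 * p i ^+ 2 + v ^+ 2 * \sum_i sigma i ^+ 2 * q i ^+ 2)
    + 2 * \sum_i sigma i ^+ 2 * (p i - q i) ^+ 2 * (u * p i + v * q i)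
    <= c * (\sum_i sigma i * (p i - q i) ^+ 2 - ell) ^+ 2 ->
  1 - c <= prob_claim_H1 L R p q sigma ell.
Proof.
set D := \sum_i sigma i * (p i - q i) ^+ 2 => ltD hc.
have mass1 : expect (wprod P P) (fun _ => 1) = 1.
  by rewrite (expect_wprod_l _ (fun _ => 1)) expect_pair1.
have mean : expect (wprod P P) (fun z => \sum_i sigma i * emp_diff K z.1 i * emp_diff K z.2 i) = D.
  by rewrite expect_bilinear_iid; apply: eq_bigr => i _; rewrite expect_emp_diff.
rewrite prob_claim_H1E //.
apply: (chebyshev_ge (sample_quadruple_ge0 p_simplex q_simplex) _ ltD); first exact: mass1.
rewrite (expect_center_sqr mass1 mean).
rewrite expect_bilinear_iid_sqr; apply: le_trans hc.
under eq_bigr => i _ do under eq_bigr => j _ do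
  rewrite (expect_emp_diff2 p_simplex q_simplex L_gt0 R_gt0).
by apply: bilinear_variance_le; rewrite ?invr_ge0 ?ler0n.
Qed.

End Test.

Section Thresholds.
Variables (K : rcfType) (L R : nat).
Hypotheses (L_gt0 : (0 < L)%N) (R_gt0 : (0 < R)%N).

Local Notation u := (L%:R^-1 : K).
Local Notation v := (R%:R^-1 : K).

Let L_pos : 0 < L%:R :> K. Proof. by rewrite ltr0n. Qed.
Let R_pos : 0 < R%:R :> K. Proof. by rewrite ltr0n. Qed.

Lemma harmonic_invE : (2 * L%:R * R%:R / (L + R)%:R)^-1 = (u + v) / 2 :> K.
Proof.
by rewrite natrD; field; rewrite !gt_eqF ?addr_gt0.
Qed.

Lemma gammaE : R%:R / (L + R)%:R = u / (u + v) :> K.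
Proof.
by rewrite natrD; field; rewrite !gt_eqF ?addr_gt0 ?invr_gt0.
Qed.

Lemma null_threshold (S ell theta : K) : 1 <= theta -> 0 <= S ->
  2 * Num.sqrt 2 * theta * (2 * L%:R * R%:R / (L + R)%:R)^-1 * Num.sqrt S <= ell ->
  0 <= ell /\ (u + v) ^+ 2 * (2 * S) <= 1 / theta ^+ 2 * ell ^+ 2.
Proof.
rewrite harmonic_invE => theta_ge1 S_ge0.
have theta_gt0 : 0 < theta by apply: lt_le_trans theta_ge1.
set x := (X in X <= ell) => x_le.
have x_ge0 : 0 <= x.
  by rewrite /x !mulr_ge0 ?sqrtr_ge0 ?addr_ge0 ?invr_ge0 ?ler0n // ltW.
have x_sqr : x ^+ 2 = theta ^+ 2 * ((u + v) ^+ 2 * (2 * S)).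
  by rewrite /x !exprMn !sqr_sqrtr ?ler0n //; field; rewrite !gt_eqF.
split; first exact: le_trans x_le.
rewrite mul1r [_ * ell ^+ 2]mulrC ler_pdivlMr ?exprn_gt0 // mulrC -x_sqr.
by rewrite ler_sqr ?nnegrE // (le_trans x_ge0).
Qed.

Variables (n : nat) (p q sigma : 'I_n -> K).
Hypotheses (p_ge0 : forall i, 0 <= p i) (q_ge0 : forall i, 0 <= q i).

Local Notation M := (2 * L%:R * R%:R / (L + R)%:R : K).
Local Notation gamma := (R%:R / (L + R)%:R : K).
Local Notation Sp := (\sum_i sigma i ^+ 2 * p i ^+ 2).
Local Notation Sq := (\sum_i sigma i ^+ 2 * q i ^+ 2).
Local Notation Y := (\sum_i sigma i ^+ 2 * (p i - q i) ^+ 2 * (u * p i + v * q i)).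

Local Notation a := ((Num.sqrt M)^-1 * Num.sqrt (\sum_i sigma i ^+ 2 * (p i - q i) ^+ 2 *
                                         (gamma * p i + (1 - gamma) * q i))).
Local Notation b := (M^-1 * Num.sqrt (gamma * Sp + (1 - gamma) * Sq)).

Let M_gt0 : 0 < M.
Proof. by rewrite -invr_gt0 harmonic_invE divr_gt0 ?addr_gt0 ?invr_gt0. Qed.

Let a_ge0 : 0 <= a. Proof. by rewrite mulr_ge0 ?invr_ge0 ?sqrtr_ge0. Qed.
Let b_ge0 : 0 <= b. Proof. by rewrite mulr_ge0 ?invr_ge0 ?sqrtr_ge0 ?ltW. Qed.

Lemma alt_radius : 4 * (u ^+ 2 * Sp + v ^+ 2 * Sq) + 2 * Y <= 16 * (a + b) ^+ 2.
Proof.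
have u_gt0 : 0 < u by rewrite invr_gt0.
have v_gt0 : 0 < v by rewrite invr_gt0.
have uv_gt0 : 0 < u + v by rewrite addr_gt0.
have sum_ge0 (f : 'I_n -> K) : (forall i, 0 <= f i) -> 0 <= \sum_i f i.
  by move=> f_ge0; apply: sumr_ge0 => i _.
have Sp_ge0 : 0 <= Sp by apply: sum_ge0 => i; rewrite mulr_ge0 ?sqr_ge0.
have Sq_ge0 : 0 <= Sq by apply: sum_ge0 => i; rewrite mulr_ge0 ?sqr_ge0.
have Y_ge0 : 0 <= Y.
  apply: sum_ge0 => i; apply: mulr_ge0; first by apply: mulr_ge0; exact: sqr_ge0.
  by apply: addr_ge0; apply: mulr_ge0 => //; exact: ltW.
have gammabE : 1 - gamma = v / (u + v) by rewrite gammaE; field; rewrite !gt_eqF ?addr_gt0.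
have gamma_ge0 : 0 <= gamma by rewrite gammaE divr_ge0 ?ltW.
have gammab_ge0 : 0 <= 1 - gamma by rewrite gammabE divr_ge0 ?ltW.
have a_sqr : a ^+ 2 = Y / 2.
  rewrite exprMn exprVn !sqr_sqrtr ?(ltW M_gt0) //; last first.
    apply: sum_ge0 => i; apply: mulr_ge0; first by apply: mulr_ge0; exact: sqr_ge0.
    by apply: addr_ge0; exact: mulr_ge0.
  rewrite harmonic_invE gammabE gammaE mulr_sumr mulr_suml.
  by apply: eq_bigr => i _; field; rewrite !gt_eqF ?addr_gt0.
have b_sqr : b ^+ 2 = (u + v) * (u * Sp + v * Sq) / 4.
  rewrite exprMn sqr_sqrtr; last by apply: addr_ge0; exact: mulr_ge0.
  by rewrite exprVn -exprVn harmonic_invE gammabE gammaE; field; rewrite !gt_eqF ?addr_gt0.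
have uvSp := mulr_ge0 (mulr_ge0 (ltW u_gt0) (ltW v_gt0)) Sp_ge0.
have uvSq := mulr_ge0 (mulr_ge0 (ltW u_gt0) (ltW v_gt0)) Sq_ge0.
have := mulr_ge0 a_ge0 b_ge0.
rewrite sqrrD a_sqr b_sqr; move: (a * b) => ab ab_ge0.
rewrite -subr_ge0; set slack := (X in 0 <= X).
have -> : slack = 6 * Y + 32 * ab + 4 * (u * v * Sp) + 4 * (u * v * Sq).
  by rewrite /slack; field; rewrite !gt_eqF ?addr_gt0.
lra.
Qed.

Lemma alt_threshold (ell theta : K) : 1 <= theta ->
  ell + 2 * Num.sqrt 2 * theta * (a + b) < \sum_i sigma i * (p i - q i) ^+ 2 ->
  ell < \sum_i sigma i * (p i - q i) ^+ 2 /\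
  4 * (u ^+ 2 * Sp + v ^+ 2 * Sq) + 2 * Y <=
    3 / theta ^+ 2 * (\sum_i sigma i * (p i - q i) ^+ 2 - ell) ^+ 2.
Proof.
set D := \sum_i sigma i * (p i - q i) ^+ 2 => theta_ge1 hD.
have theta_gt0 : 0 < theta by apply: lt_le_trans theta_ge1.
have margin_ge0 : 0 <= 2 * Num.sqrt 2 * theta * (a + b).
  by rewrite !mulr_ge0 ?sqrtr_ge0 ?addr_ge0 ?ler0n ?(ltW theta_gt0).
split; first by rewrite (le_lt_trans _ hD) // lerDl.
have margin_sqr : 8 * theta ^+ 2 * (a + b) ^+ 2 <= (D - ell) ^+ 2.
  have -> : 8 * theta ^+ 2 * (a + b) ^+ 2 = (2 * Num.sqrt 2 * theta * (a + b)) ^+ 2.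
    by rewrite !exprMn sqr_sqrtr ?ler0n //; ring.
  rewrite ler_sqr ?nnegrE // ?lerBrDl ?ltW //.
  by rewrite addr0 (le_lt_trans _ hD) // lerDl.
have := alt_radius; set V := _ + _ => radius.
rewrite mulrAC ler_pdivlMr ?exprn_gt0 //.
have : V * theta ^+ 2 <= 16 * (a + b) ^+ 2 * theta ^+ 2.
  by rewrite ler_wpM2r ?sqr_ge0.
have := sqr_ge0 (D - ell).
(* This yields the bound 2 / theta^2, slightly better than required. *)
lra.
Qed.

End Thresholds.

Unset Implicit Arguments. Set Strict Implicit.
Theorem proposition1 (K : rcfType) (n L R : nat) (p q sigma : 'I_n -> K)
  (ell theta : K) :
  (0 < L)%N -> (0 < R)%N ->
  in_simplex p -> in_simplex q ->
  (forall i, 0 <= sigma i) ->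
  1 <= theta ->
  let gamma : K := R%:R / (L + R)%:R in
  let gammab : K := 1 - gamma in
  let M : K := 2 * L%:R * R%:R / (L + R)%:R in
  2 * Num.sqrt 2 * theta * M^-1 * Num.sqrt (\sum_(i < n) sigma i ^+ 2 * p i ^+ 2) <= ell ->
  (p = q -> prob_claim_H1 L R p q sigma ell <= 1 / theta ^+ 2) /\
  (\sum_(i < n) sigma i * (p i - q i) ^+ 2 >
     ell + 2 * Num.sqrt 2 * theta *
       ((Num.sqrt M)^-1 *
          Num.sqrt (\sum_(i < n) sigma i ^+ 2 * (p i - q i) ^+ 2 *
                                 (gamma * p i + gammab * q i))
        + M^-1 * Num.sqrt (gamma * \sum_(i < n) sigma i ^+ 2 * p i ^+ 2
                           + gammab * \sum_(i < n) sigma i ^+ 2 * q i ^+ 2)) ->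
   1 - 3 / theta ^+ 2 <= prob_claim_H1 L R p q sigma ell).
Proof.
move=> L_gt0 R_gt0 p_simplex q_simplex sigma_ge0 theta_ge1 gamma gammab M null_margin.
have Sp_ge0 : 0 <= \sum_i sigma i ^+ 2 * p i ^+ 2.
  by apply: sumr_ge0 => i _; rewrite mulr_ge0 ?sqr_ge0.
split=> [<-|alt_margin].
  have [ell_ge0 second_moment] := null_threshold L_gt0 R_gt0 theta_ge1 Sp_ge0 null_margin.
  by apply: prob_claim_H1_null_le; rewrite // mul1r invr_ge0 sqr_ge0.
have [p_ge0 _] := p_simplex; have [q_ge0 _] := q_simplex.
have [ltD variance] := alt_threshold L_gt0 R_gt0 p_ge0 q_ge0 theta_ge1 alt_margin.
exact: prob_claim_H1_alt_ge.
Qed.
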